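(* Let $\mathcal E$ be an exact category and $\Phi:\operatorname{Serre}(\mathcal E)\to\operatorname{MSpec}\mathsf M(\mathcal E)$, $\Phi(\mathcal S)=\mathsf M(\mathcal E)\setminus\mathsf M_{\mathcal S}$ where $\mathsf M_{\mathcal S}=\{[X]\mid X\in\mathcal S\}$. Then: (1) $\Phi$ is a homeomorphism for the Zariski topologies; (2) the sets $U_X=\{\mathcal S\in\operatorname{Serre}(\mathcal E)\mid X\in\mathcal S\}$, $X\in\mathcal E$, form an open basis of $\operatorname{Serre}(\mathcal E)$; (3) for $\mathcal S,\mathcal T\in\operatorname{Serre}(\mathcal E)$, $\mathcal S$ lies in the closure of $\{\mathcal T\}$ if and only if $\mathcal S\subseteq\mathcal T$, i.e. the specialization order on $\operatorname{Serre}(\mathcal E)$ is inclusion.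
   Context: An exact category $\mathcal E$ is an additive full subcategory of an abelian category closed under extensions; conflations are short exact sequences with all terms in $\mathcal E$. The Grothendieck monoid $\mathsf M(\mathcal E)$ is the commutative monoid with a map $X\mapsto[X]$ on isomorphism classes with $[0]=0$ and $[Y]=[X]+[Z]$ for each conflation $0\to X\to Y\to Z\to 0$, universal among such maps. A Serre subcategory is a full additive subcategory $\mathcal S$ closed under isomorphisms such that for each conflation, $Y\in\mathcal S$ iff $X,Z\in\mathcal S$. A prime ideal of a monoid $M$ is a subset $\mathfrak p\ne M$ with $x+a\in\mathfrak p$ for $x\in\mathfrak p$, $a\in M$, and $x+y\in\mathfrak p\Rightarrow x\in\mathfrak p$ or $y\in\mathfrak p$. Zariski topology on $\operatorname{MSpec}M$: closed sets $V(S)=\{\mathfrak p\mid\mathfrak p\supseteq S\}$, $S\subseteq M$. Zariski topology on $\operatorname{Serre}(\mathcal E)$: closed sets $V(\mathcal X)=\{\mathcal S\mid\mathcal S\cap\mathcal X=\emptyset\}$ for subcategories (classes of objects closed under isomorphism) $\mathcal X\subseteq\mathcal E$. *)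

From HB Require Import structures.
From mathcomp Require Import all_boot all_algebra.

Set Implicit Arguments.
Unset Strict Implicit.
Unset Printing Implicit Defensive.

Local Open Scope ring_scope.

Record PreAdd := {
  Ob : Type;
  Hom : Ob -> Ob -> zmodType;
  comp : forall X Y Z : Ob, Hom Y Z -> Hom X Y -> Hom X Z;
  idm : forall X : Ob, Hom X X;
  compA : forall X Y Z W (h : Hom Z W) (g : Hom Y Z) (f : Hom X Y),
      comp h (comp g f) = comp (comp h g) f;
  comp1f : forall X Y (f : Hom X Y), comp (idm Y) f = f;
  compf1 : forall X Y (f : Hom X Y), comp f (idm X) = f;
  compDl : forall X Y Z (g1 g2 : Hom Y Z) (f : Hom X Y),
      comp (g1 + g2) f = comp g1 f + comp g2 f;
  compDr : forall X Y Z (g : Hom Y Z) (f1 f2 : Hom X Y),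
      comp g (f1 + f2) = comp g f1 + comp g f2
}.

Arguments comp {p X Y Z}.
Arguments idm {p}.

Section CatDefs.
Context {A : PreAdd}.

Definition is_zero_obj (Z : Ob A) : Prop :=
  forall Y : Ob A, (forall f : Hom Z Y, f = 0) /\ (forall g : Hom Y Z, g = 0).

Definition is_mono {X Y : Ob A} (f : Hom X Y) : Prop :=
  forall W (g h : Hom W X), comp f g = comp f h -> g = h.

Definition is_epi {X Y : Ob A} (f : Hom X Y) : Prop :=
  forall W (g h : Hom Y W), comp g f = comp h f -> g = h.

Definition is_kernel {K X Y : Ob A} (k : Hom K X) (f : Hom X Y) : Prop :=
  comp f k = 0 /\
  forall W (h : Hom W X), comp f h = 0 ->
    exists u : Hom W K, comp k u = h /\ forall u' : Hom W K, comp k u' = h -> u' = u.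

Definition is_cokernel {X Y C : Ob A} (c : Hom Y C) (f : Hom X Y) : Prop :=
  comp c f = 0 /\
  forall W (h : Hom Y W), comp h f = 0 ->
    exists u : Hom C W, comp u c = h /\ forall u' : Hom C W, comp u' c = h -> u' = u.

Definition is_biprod (X Y S : Ob A) (i1 : Hom X S) (i2 : Hom Y S)
    (p1 : Hom S X) (p2 : Hom S Y) : Prop :=
  [/\ comp p1 i1 = idm X, comp p2 i2 = idm Y, comp p1 i2 = 0, comp p2 i1 = 0
    & comp i1 p1 + comp i2 p2 = idm S].

Definition iso (X Y : Ob A) : Prop :=
  exists (f : Hom X Y) (g : Hom Y X), comp g f = idm X /\ comp f g = idm Y.

Definition short_exact {X Y Z : Ob A} (f : Hom X Y) (g : Hom Y Z) : Prop :=
  is_kernel f g /\ is_cokernel g f.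

End CatDefs.

Definition is_abelian (A : PreAdd) : Prop :=
  (exists Z : Ob A, is_zero_obj Z) /\
  [/\ forall X Y : Ob A, exists (S : Ob A) (i1 : Hom X S) (i2 : Hom Y S)
         (p1 : Hom S X) (p2 : Hom S Y), is_biprod i1 i2 p1 p2,
      forall (X Y : Ob A) (f : Hom X Y), exists (K : Ob A) (k : Hom K X), is_kernel k f,
      forall (X Y : Ob A) (f : Hom X Y), exists (C : Ob A) (c : Hom Y C), is_cokernel c f,
      forall (X Y : Ob A) (f : Hom X Y), is_mono f ->
         exists (Z : Ob A) (g : Hom Y Z), is_kernel f g
    & forall (X Y : Ob A) (f : Hom X Y), is_epi f ->
         exists (W : Ob A) (h : Hom W X), is_cokernel f h].

Section ExactDefs.
Context {A : PreAdd}.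

Definition additive_sub (S : Ob A -> Prop) : Prop :=
  (exists Z, is_zero_obj Z /\ S Z) /\
  (forall (X Y B : Ob A) (i1 : Hom X B) (i2 : Hom Y B) (p1 : Hom B X) (p2 : Hom B Y),
      is_biprod i1 i2 p1 p2 -> S X -> S Y -> S B).

Definition ext_closed (S : Ob A -> Prop) : Prop :=
  forall (X Y Z : Ob A) (f : Hom X Y) (g : Hom Y Z), short_exact f g -> S X -> S Z -> S Y.

(* exact category = additive full subcategory of the abelian category A
   closed under extensions *)
Definition exact_cat (E : Ob A -> Prop) : Prop := additive_sub E /\ ext_closed E.

Definition conflation (E : Ob A -> Prop) (X Y Z : Ob A) : Prop :=
  [/\ E X, E Y, E Z & exists (f : Hom X Y) (g : Hom Y Z), short_exact f g].

Definition additive_map (E : Ob A -> Prop) (N : nmodType) (n : Ob A -> N) : Prop :=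
  [/\ forall Z, E Z -> is_zero_obj Z -> n Z = 0,
      forall X Y, E X -> E Y -> iso X Y -> n X = n Y
    & forall X Y Z, conflation E X Y Z -> n Y = n X + n Z].

Definition monoid_morph (M N : nmodType) (phi : M -> N) : Prop :=
  phi 0 = 0 /\ forall a b, phi (a + b) = phi a + phi b.

Definition is_groth (E : Ob A -> Prop) (M : nmodType) (m : Ob A -> M) : Prop :=
  additive_map E m /\
  forall (N : nmodType) (n : Ob A -> N), additive_map E n ->
    exists phi : M -> N,
      [/\ monoid_morph phi, (forall X, E X -> phi (m X) = n X)
        & forall psi : M -> N, monoid_morph psi -> (forall X, E X -> psi (m X) = n X) ->
            forall a, psi a = phi a].

Definition is_serre (E : Ob A -> Prop) (S : Ob A -> Prop) : Prop :=
  [/\ forall X, S X -> E X,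
      additive_sub S,
      forall X Y, S X -> iso X Y -> S Y
    & forall X Y Z, conflation E X Y Z -> (S Y <-> S X /\ S Z)].

Definition is_subclass (E : Ob A -> Prop) (X : Ob A -> Prop) : Prop :=
  (forall Y, X Y -> E Y) /\ (forall Y Z, X Y -> iso Y Z -> X Z).

(* Zariski closed subsets of Serre(E): V(X) = {S | S cap X = empty};
   a subset is given by a predicate C, considered only on Serre subcategories *)
Definition serre_closed (E : Ob A -> Prop) (C : (Ob A -> Prop) -> Prop) : Prop :=
  exists X, is_subclass E X /\
    forall S, is_serre E S -> (C S <-> forall Y, S Y -> ~ X Y).

Definition serre_open (E : Ob A -> Prop) (O : (Ob A -> Prop) -> Prop) : Prop :=
  serre_closed E (fun S => ~ O S).

Definition in_closure (E : Ob A -> Prop) (S T : Ob A -> Prop) : Prop :=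
  forall C, serre_closed E C -> C T -> C S.

Definition Phi (M : nmodType) (m : Ob A -> M) (S : Ob A -> Prop) : M -> Prop :=
  fun a => ~ exists X, S X /\ m X = a.

End ExactDefs.

Definition is_prime (M : nmodType) (p : M -> Prop) : Prop :=
  [/\ exists a, ~ p a,
      forall x a, p x -> p (x + a)
    & forall x y, p (x + y) -> p x \/ p y].

Definition mspec_closed (M : nmodType) (C : (M -> Prop) -> Prop) : Prop :=
  exists T : M -> Prop, forall p, is_prime p -> (C p <-> forall a, T a -> p a).

(* f restricts to a homeomorphism from the subspace P (closed sets clT)
   onto the subspace Q (closed sets clU) *)
Definition homeo_on {T U : Type} (P : T -> Prop) (Q : U -> Prop)
    (clT : (T -> Prop) -> Prop) (clU : (U -> Prop) -> Prop) (f : T -> U) : Prop :=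
  [/\ forall x, P x -> Q (f x),
      forall x y, P x -> P y -> f x = f y -> x = y,
      forall y, Q y -> exists x, P x /\ f x = y,
      forall C, clU C -> clT (fun x => C (f x))
    & forall C, clT C -> clU (fun y => exists x, [/\ P x, C x & f x = y])].

(* The class map m : E -> M(E) is onto, because its image is a submonoid
   through which m factors.  A Serre subcategory S is a union of fibres of m:
   its indicator X |-> [X \notin S] is additive with values in the Boolean
   monoid ({0,1}, or), so it factors through m.  Hence S is recovered from
   M_S, the complement Phi(S) of M_S is a prime ideal because classes add
   along conflations, and conversely a prime p yields the Serre subcategory
   {X | [X] \notin p}.  Under Phi, "S avoids the objects of X" becomes
   "Phi(S) contains the classes of X", so V(X) corresponds to V([X]);
   U_X is the complement of V(class of X), which gives the basis and shows
   that specialization is inclusion. *)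

From HB Require Import structures.
From mathcomp Require Import all_boot all_algebra.
From mathcomp Require Import boolp.

Set Implicit Arguments.
Unset Strict Implicit.
Unset Printing Implicit Defensive.

Import GRing.Theory.
Local Open Scope ring_scope.

Definition orbool : Type := bool.
HB.instance Definition _ := Choice.on orbool.
HB.instance Definition _ :=
  GRing.isNmodule.Build orbool orbA orbC (fun b : orbool => erefl : false || b = b).

Definition submonoid (M : nmodType) (S : {pred M}) (S_closed : addr_closed S) : Type :=
  {x : M | x \in S}.
HB.instance Definition _ M S S_closed := Choice.on (@submonoid M S S_closed).
HB.instance Definition _ M S S_closed := SubType.on (@submonoid M S S_closed).
HB.instance Definition _ M S S_closed :=
  GRing.SubChoice_isSubNmodule.Build M S (@submonoid M S S_closed) S_closed.

Section PreAdditive.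
Context {A : PreAdd}.

Lemma comp0f (X Y Z : Ob A) (f : Hom X Y) : comp (0 : Hom Y Z) f = 0.
Proof. by apply/(addrI (comp (0 : Hom Y Z) f)); rewrite -compDl !addr0. Qed.

Lemma compf0 (X Y Z : Ob A) (g : Hom Y Z) : comp g (0 : Hom X Y) = 0.
Proof. by apply/(addrI (comp g (0 : Hom X Y))); rewrite -compDr !addr0. Qed.

Lemma zero_obj_iso (Z Z' : Ob A) : is_zero_obj Z -> is_zero_obj Z' -> iso Z Z'.
Proof.
move=> hZ hZ'; exists 0, 0; split.
  by rewrite (proj1 (hZ Z) (comp _ _)) (proj1 (hZ Z) (idm Z)).
by rewrite (proj1 (hZ' Z') (comp _ _)) (proj1 (hZ' Z') (idm Z')).
Qed.

Lemma iso_sym (X Y : Ob A) : iso X Y -> iso Y X.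
Proof. by case=> f [g [gf fg]]; exists g, f. Qed.

Lemma iso_short_exact (Z X Y : Ob A) (f : Hom X Y) (g : Hom Y X) :
  is_zero_obj Z -> comp g f = idm X -> comp f g = idm Y ->
  short_exact (0 : Hom Z X) f.
Proof.
move=> hZ gf fg; split; split; rewrite ?compf0 //.
- move=> W h fh0; exists 0; split; last by move=> u' _; apply: (proj2 (hZ W)).
  by rewrite comp0f -[h]comp1f -gf -compA fh0 compf0.
- move=> W h _; exists (comp h g); split; first by rewrite -compA gf compf1.
  by move=> u' <-; rewrite -compA fg compf1.
Qed.

Lemma biprod_short_exact (X Y B : Ob A) (i1 : Hom X B) (i2 : Hom Y B)
    (p1 : Hom B X) (p2 : Hom B Y) :
  is_biprod i1 i2 p1 p2 -> short_exact i1 p2.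
Proof.
case=> p1i1 p2i2 p1i2 p2i1 split_id; split; split => //.
- move=> W h p2h; exists (comp p1 h); split; last first.
    by move=> u' <-; rewrite compA p1i1 comp1f.
  by rewrite -[h in RHS]comp1f -split_id compDl -!compA p2h compf0 addr0 compA.
- move=> W h hi1; exists (comp h i2); split; last first.
    by move=> u' <-; rewrite -compA p2i2 compf1.
  by rewrite -[h in RHS]compf1 -split_id compDr !compA hi1 comp0f add0r.
Qed.

End PreAdditive.

Section ExactCategory.
Context {A : PreAdd} (E : Ob A -> Prop) (HE : exact_cat E).

Lemma exact_cat_zero : exists Z, is_zero_obj Z /\ E Z.
Proof. by case: HE => [[]]. Qed.

Lemma exact_cat_iso (X Y : Ob A) : E X -> iso X Y -> E Y.
Proof.
case: HE => [[[Z [hZ EZ]] _] ext] EX [f [g [gf fg]]].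
exact: ext _ _ _ _ _ (iso_short_exact hZ fg gf) EZ EX.
Qed.

Lemma biprod_conflation (X Y B : Ob A) (i1 : Hom X B) (i2 : Hom Y B)
    (p1 : Hom B X) (p2 : Hom B Y) :
  is_biprod i1 i2 p1 p2 -> E X -> E Y -> conflation E X B Y.
Proof.
move=> hB EX EY; split=> //; last by exists i1, p2; exact: biprod_short_exact hB.
by case: HE => [[_ Eadd] _]; exact: Eadd hB EX EY.
Qed.

Section AdditiveMap.
Variables (N : nmodType) (n : Ob A -> N).
Hypothesis n_add : additive_map E n.

Lemma additive_map_biprod (X Y B : Ob A) (i1 : Hom X B) (i2 : Hom Y B)
    (p1 : Hom B X) (p2 : Hom B Y) :
  is_biprod i1 i2 p1 p2 -> E X -> E Y -> n B = n X + n Y.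
Proof. by move=> hB EX EY; case: n_add => _ _; apply; exact: biprod_conflation hB EX EY. Qed.

Lemma additive_map_comp (L : nmodType) (phi : N -> L) :
  monoid_morph phi -> additive_map E (phi \o n).
Proof.
case=> phi0 phiD; case: n_add => n0 n_iso n_confl; split=> /=.
- by move=> Z EZ hZ; rewrite n0.
- by move=> X Y EX EY hXY; rewrite (n_iso X Y).
- by move=> X Y Z hc; rewrite (n_confl X Y Z) ?phiD.
Qed.

End AdditiveMap.
End ExactCategory.

Section GrothendieckMonoid.
Context {A : PreAdd} (E : Ob A -> Prop) (M : nmodType) (m : Ob A -> M).
Hypothesis HM : is_groth E m.

Lemma groth_morph_ext (N : nmodType) (psi1 psi2 : M -> N) :
  monoid_morph psi1 -> monoid_morph psi2 ->
  (forall X, E X -> psi1 (m X) = psi2 (m X)) -> psi1 =1 psi2.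
Proof.
move=> h1 h2 e; case: HM => m_add /(_ _ _ (additive_map_comp m_add h1)).
case=> phi [_ _ uniq] a.
by rewrite (uniq psi1 h1 (fun _ _ => erefl)) (uniq psi2 h2 (fun X EX => esym (e X EX))).
Qed.

Lemma groth_additive_eq (N : nmodType) (n : Ob A -> N) (X Y : Ob A) :
  additive_map E n -> E X -> E Y -> m X = m Y -> n X = n Y.
Proof.
move=> n_add EX EY mXY; case: HM => _ /(_ _ _ n_add) [phi [_ phi_m _]].
by rewrite -phi_m // -phi_m // mXY.
Qed.

Lemma groth_ind (S : {pred M}) (S_closed : addr_closed S) :
  (forall X, E X -> m X \in S) -> forall a, a \in S.
Proof.
move=> mS a; case: HM => m_add univ.
pose n X : submonoid S_closed := insubd 0 (m X).
have val_n X : E X -> val (n X) = m X by move=> EX; rewrite insubdK ?mS.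
have n_add : additive_map E n.
  case: m_add => m0 m_iso m_confl; split.
  - by move=> Z EZ hZ; apply: val_inj; rewrite val_n // m0.
  - by move=> X Y EX EY hXY; rewrite /n (m_iso X Y).
  - move=> X Y Z hc; case: (hc) => EX EY EZ _.
    by apply: val_inj; rewrite GRing.valD !val_n // (m_confl X Y Z).
have [phi [[phi0 phiD] phi_m _]] := univ _ _ n_add.
have val_phi : (val \o phi) =1 id.
  apply: groth_morph_ext => [||X EX /=]; last by rewrite phi_m ?val_n.
  - by split=> [|x y] /=; rewrite ?phi0 ?phiD.
  - by split.
by rewrite -[a]val_phi; exact: valP.
Qed.

End GrothendieckMonoid.

Section SerreSubcategory.
Context {A : PreAdd} (E S : Ob A -> Prop) (HS : is_serre E S).

Lemma serre_sub (X : Ob A) : S X -> E X.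
Proof. by case: HS => sub _ _ _; exact: sub. Qed.

Lemma serre_zero (Z : Ob A) : is_zero_obj Z -> S Z.
Proof.
case: HS => _ [[Z0 [hZ0 SZ0]] _] S_iso _ hZ.
exact: S_iso _ _ SZ0 (zero_obj_iso hZ0 hZ).
Qed.

Lemma serre_indicator_additive : additive_map E (fun X => ~~ `[< S X >] : orbool).
Proof.
case: HS => _ _ S_iso S_confl; split.
- by move=> Z _ hZ; rewrite (asboolT (serre_zero hZ)).
- move=> X Y _ _ hXY; congr (~~ _); apply/asboolP/asboolP => [SX|SY].
    exact: S_iso hXY.
  exact: S_iso (iso_sym hXY).
- move=> X Y Z /S_confl SY.
  by do 3!case: asboolP => ? //; exfalso; tauto.
Qed.

Lemma serre_class_closed (M : nmodType) (m : Ob A -> M) (X Y : Ob A) :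
  is_groth E m -> E X -> E Y -> m X = m Y -> S X -> S Y.
Proof.
move=> HM EX EY mXY /asboolP SX; apply/asboolP.
by have := groth_additive_eq HM serre_indicator_additive EX EY mXY; rewrite SX; case: asboolP.
Qed.

End SerreSubcategory.

Section PrimeIdeal.
Context {M : nmodType} (p : M -> Prop) (hp : is_prime p).

Lemma prime_not0 : ~ p 0.
Proof. by case: hp => [[a pNa] p_ideal _] p0; apply: pNa; rewrite -[a]add0r; exact: p_ideal. Qed.

Lemma prime_addN (x y : M) : ~ p (x + y) <-> ~ p x /\ ~ p y.
Proof.
case: hp => _ p_ideal p_prime; split; last by case=> pNx pNy /p_prime[].
move=> pNxy; split=> [px|py]; apply: pNxy; first exact: p_ideal.
by rewrite addrC; exact: p_ideal.
Qed.

End PrimeIdeal.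

Lemma abelian_biprod {A : PreAdd} (X Y : Ob A) : is_abelian A ->
  exists B (i1 : Hom X B) (i2 : Hom Y B) (p1 : Hom B X) (p2 : Hom B Y),
    is_biprod i1 i2 p1 p2.
Proof. by case=> _ [biprod _ _ _ _]; exact: biprod. Qed.

Section SerrePrimeCorrespondence.
Context {A : PreAdd} (HA : is_abelian A) (E : Ob A -> Prop) (HE : exact_cat E)
  (M : nmodType) (m : Ob A -> M) (HM : is_groth E m).

Let m_add : additive_map E m := proj1 HM.

Lemma groth_surj (a : M) : exists X, E X /\ m X = a.
Proof.
pose im := [pred b | `[< exists X, E X /\ m X = b >]].
have im_closed : addr_closed im.
  split=> [|_ _ /asboolP[X [EX <-]] /asboolP[Y [EY <-]]]; apply/asboolP.
    have [Z [hZ EZ]] := exact_cat_zero HE.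
    by exists Z; split=> //; case: m_add => m0 _ _; exact: m0.
  have [B [i1 [i2 [p1 [p2 hB]]]]] := abelian_biprod X Y HA.
  exists B; split; first by case: (biprod_conflation HE hB EX EY).
  by rewrite (additive_map_biprod HE m_add hB EX EY).
apply/asboolP; apply: (groth_ind HM im_closed) => X EX.
by apply/asboolP; exists X.
Qed.

Lemma Phi_class (S : Ob A -> Prop) (X : Ob A) :
  is_serre E S -> E X -> Phi m S (m X) <-> ~ S X.
Proof.
move=> HS EX; split=> [PhiX SX | SNX [Y [SY mYX]]]; first by apply: PhiX; exists X.
by apply: SNX; exact: (serre_class_closed HS HM (serre_sub HS SY) EX mYX SY).
Qed.

Lemma PhiD (S : Ob A -> Prop) (x y : M) :
  is_serre E S -> Phi m S (x + y) <-> Phi m S x \/ Phi m S y.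
Proof.
move=> HS; have [X [EX <-]] := groth_surj x; have [Y [EY <-]] := groth_surj y.
have [B [i1 [i2 [p1 [p2 hB]]]]] := abelian_biprod X Y HA.
have hc := biprod_conflation HE hB EX EY; have [_ EB _ _] := hc.
have [_ _ _ /(_ _ _ _ hc) SB] := HS.
rewrite -(additive_map_biprod HE m_add hB EX EY).
have := Phi_class HS EB; have := Phi_class HS EX; have := Phi_class HS EY.
by have := not_andP (S X) (S Y); tauto.
Qed.

Lemma Phi_prime (S : Ob A -> Prop) : is_serre E S -> is_prime (Phi m S).
Proof.
move=> HS; split.
- have [Z [hZ EZ]] := exact_cat_zero HE.
  by exists (m Z) => /(Phi_class HS EZ); apply; exact: (serre_zero HS hZ).
- by move=> x a Phix; apply/(PhiD _ _ HS); left.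
- by move=> x y /(PhiD _ _ HS).
Qed.

Lemma Phi_inj (S T : Ob A -> Prop) :
  is_serre E S -> is_serre E T -> Phi m S = Phi m T -> S = T.
Proof.
have sub R R' : is_serre E R -> is_serre E R' -> Phi m R = Phi m R' ->
    forall X, R X -> R' X.
  move=> HR HR' RR' X RX; have EX := serre_sub HR RX.
  apply: contrapT => /(Phi_class HR' EX); rewrite -RR'.
  by move/(Phi_class HR EX).
move=> HS HT ST; apply/funext => X; apply/propext.
by split; apply: sub.
Qed.

Definition serre_of_prime (p : M -> Prop) (X : Ob A) : Prop := E X /\ ~ p (m X).

Lemma serre_of_prime_serre (p : M -> Prop) :
  is_prime p -> is_serre E (serre_of_prime p).
Proof.
move=> hp; have [m0 m_iso m_confl] := m_add; split.
- by move=> X [].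
- split.
    have [Z [hZ EZ]] := exact_cat_zero HE.
    by exists Z; split=> //; split=> //; rewrite m0 //; exact: prime_not0.
  move=> X Y B i1 i2 p1 p2 hB [EX pNX] [EY pNY].
  split; first by case: (biprod_conflation HE hB EX EY).
  by rewrite (additive_map_biprod HE m_add hB EX EY); exact/(prime_addN hp).
- move=> X Y [EX pNX] hXY; have EY := exact_cat_iso HE EX hXY.
  by split=> //; rewrite -(m_iso X Y).
- move=> X Y Z hc; have [EX EY EZ _] := hc.
  rewrite /serre_of_prime (m_confl X Y Z) //.
  by have := prime_addN hp (m X) (m Z); tauto.
Qed.

Lemma Phi_serre_of_prime (p : M -> Prop) :
  is_prime p -> Phi m (serre_of_prime p) = p.
Proof.
move=> hp; apply/funext => a; apply/propext; split.
  move=> Phia; apply: contrapT => pNa; apply: Phia.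
  have [X [EX mXa]] := groth_surj a.
  by exists X; split=> //; split=> //; rewrite mXa.
by move=> pa [X [[_ pNX] mXa]]; apply: pNX; rewrite mXa.
Qed.

Lemma serre_disjoint_Phi (S X : Ob A -> Prop) :
  is_serre E S -> (forall Y, X Y -> E Y) ->
  (forall Y, S Y -> ~ X Y) <-> (forall Y, X Y -> Phi m S (m Y)).
Proof.
move=> HS XE; split=> [disj Y XY | XPhi Y SY XY].
  by apply/(Phi_class HS (XE _ XY)) => SY; exact: disj Y SY XY.
exact: (Phi_class HS (XE _ XY)).1 (XPhi Y XY) SY.
Qed.

Lemma class_preimage_subclass (P : M -> Prop) :
  is_subclass E (fun Y => E Y /\ P (m Y)).
Proof.
split=> [Y [] // | Y Z [EY PY] hYZ]; have EZ := exact_cat_iso HE EY hYZ.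
by split=> //; have [_ m_iso _] := m_add; rewrite -(m_iso Y Z).
Qed.

Lemma Phi_continuous (C : (M -> Prop) -> Prop) :
  mspec_closed C -> serre_closed E (fun S => C (Phi m S)).
Proof.
case=> T hT; exists (fun Y => E Y /\ T (m Y)).
split; first exact: class_preimage_subclass.
move=> S HS; have Phi_p := Phi_prime HS.
have disjE := serre_disjoint_Phi (X := fun Y => E Y /\ T (m Y)) HS (fun _ => @proj1 _ _).
split=> [/(hT _ Phi_p) TPhi | disj].
  by apply/disjE => Y [_ TY]; exact: TPhi.
apply/(hT _ Phi_p) => a Ta; have [Y [EY mYa]] := groth_surj a.
by rewrite -mYa; apply: (disjE.1 disj); rewrite mYa.
Qed.

Lemma Phi_closed (C : (Ob A -> Prop) -> Prop) :
  serre_closed E C ->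
  mspec_closed (fun p => exists S, [/\ is_serre E S, C S & Phi m S = p]).
Proof.
case=> X [[XE _] hX]; exists (fun a => exists Y, X Y /\ m Y = a) => p hp; split.
  move=> [S [HS CS <-]] _ [Y [XY <-]].
  exact: (serre_disjoint_Phi HS XE).1 ((hX S HS).1 CS) Y XY.
move=> Xp; have HSp := serre_of_prime_serre hp.
exists (serre_of_prime p); split=> //; last exact: Phi_serre_of_prime.
apply/(hX _ HSp)/(serre_disjoint_Phi HSp XE) => Y XY.
by rewrite Phi_serre_of_prime //; apply: Xp; exists Y.
Qed.

Lemma serre_open_mem (X : Ob A) : E X -> serre_open E (fun S => S X).
Proof.
move=> EX; exists (fun Y => E Y /\ m Y = m X).
split; first exact: (class_preimage_subclass (fun a => a = m X)).
move=> S HS; split=> [SNX Y SY [EY mYX] | disj SX]; last exact: disj X SX (conj EX erefl).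
by apply: SNX; exact: (serre_class_closed HS HM EY EX mYX SY).
Qed.

Lemma in_closure_subset (S T : Ob A -> Prop) : is_serre E S -> is_serre E T ->
  in_closure E S T <-> (forall X, S X -> T X).
Proof.
move=> HS HT; split=> [cl X SX | ST C [X [_ hX]] CT].
  apply: contrapT => TNX; exact: cl _ (serre_open_mem (serre_sub HS SX)) TNX SX.
by apply/(hX _ HS) => Y SY; exact: (hX _ HT).1 CT Y (ST _ SY).
Qed.

End SerrePrimeCorrespondence.

Lemma serre_open_basis {A : PreAdd} (E S : Ob A -> Prop)
    (O : (Ob A -> Prop) -> Prop) :
  serre_open E O -> is_serre E S -> O S ->
  exists X, [/\ E X, S X & forall T, is_serre E T -> T X -> O T].
Proof.
case=> X [[XE _] hX] HS OS.
have [Y [SY XY]] : exists Y, S Y /\ X Y.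
  apply: contrapT => noY; apply: (hX S HS).2 OS => Y SY XY.
  by apply: noY; exists Y.
exists Y; split=> //; first exact: XE.
by move=> T HT TY; apply: contrapT => TNO; exact: (hX T HT).1 TNO Y TY XY.
Qed.

Theorem mainTheorem15 (A : PreAdd) (HA : is_abelian A) (E : Ob A -> Prop)
    (HE : exact_cat E) (M : nmodType) (m : Ob A -> M) (HM : is_groth E m) :
  homeo_on (is_serre E) (@is_prime M) (serre_closed E) (@mspec_closed M) (Phi m)
  /\ ((forall X, E X -> serre_open E (fun S => S X))
      /\ (forall O, serre_open E O -> forall S, is_serre E S -> O S ->
            exists X, [/\ E X, S X & forall T, is_serre E T -> T X -> O T]))
  /\ (forall S T, is_serre E S -> is_serre E T ->
        (in_closure E S T <-> (forall X, S X -> T X))).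
Proof.
split; [split | split; [split |]].
- exact: (Phi_prime HA HE HM).
- exact: (Phi_inj HM).
- move=> p hp; exists (serre_of_prime E m p).
  by split; [exact: (serre_of_prime_serre HE HM) | exact: (Phi_serre_of_prime HA HE HM)].
- exact: (Phi_continuous HA HE HM).
- exact: (Phi_closed HA HE HM).
- exact: (serre_open_mem HE HM).
- by move=> O hO S; exact: serre_open_basis.
- exact: (in_closure_subset HE HM).
Qed.
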